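(* Let $K, C_K\subset\mathbb{R}^n$ be convex bodies such that $C_K$ is a completion of $K$, and for $\lambda\in[0,1]$ let $K_\lambda:=\lambda K+(1-\lambda)C_K$. Then for all $\lambda\in[0,1]$, \[ D(K_\lambda)=D(K)\quad\text{and}\quad w(K_\lambda)=\lambda w(K)+(1-\lambda)w(C_K). \]
   Context: A convex body is a compact convex subset of $\mathbb{R}^n$. $D(\cdot)$ denotes diameter (largest distance between two points) and $w(\cdot)$ the width (smallest distance between two distinct parallel supporting hyperplanes). $A+B=\{a+b: a\in A, b\in B\}$ is the Minkowski sum and $\lambda A=\{\lambda a: a\in A\}$. A completion of $K$ is a convex body $C_K$ with $K\subseteq C_K$ and $D(K)=D(C_K)=w(C_K)$. *)

From HB Require Import structures.
From mathcomp Require Import all_boot all_order all_algebra.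
From mathcomp Require Import all_classical all_reals all_analysis.
Set Implicit Arguments. Unset Strict Implicit. Unset Printing Implicit Defensive.
Import Order.TTheory GRing.Theory Num.Theory.
Import numFieldNormedType.Exports.
Local Open Scope classical_set_scope.
Local Open Scope ring_scope.

Section ConvexBodies.
Variables (R : realType) (n : nat).
Local Notation E := 'rV[R]_n.

Definition edot (x y : E) : R := \sum_(i < n) x ord0 i * y ord0 i.
Definition enorm (x : E) : R := Num.sqrt (edot x x).
Definition edist (x y : E) : R := enorm (x - y).

Definition convex_set (K : set E) : Prop :=
  forall x y t, K x -> K y -> 0 <= t -> t <= 1 -> K (t *: x + (1 - t) *: y).
Definition convex_body (K : set E) : Prop :=
  K !=set0 /\ compact K /\ convex_set K.

Definition mink_sum (A B : set E) : set E := [set a + b | a in A & b in B].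
Definition mink_scale (l : R) (A : set E) : set E := [set l *: a | a in A].

Definition diam (K : set E) : R :=
  sup [set edist x y | x in K & y in K].

Definition supp (K : set E) (u : E) : R := sup [set edot x u | x in K].

(* width: smallest distance between two parallel supporting hyperplanes;
   for a unit normal u the two supporting hyperplanes orthogonal to u are at
   distance h_K(u) + h_K(-u) *)
Definition width (K : set E) : R :=
  inf [set supp K u + supp K (- u) | u in [set u : E | enorm u = 1]].

Definition completion (K C : set E) : Prop :=
  convex_body C /\ K `<=` C /\ diam K = diam C /\ diam C = width C.

End ConvexBodies.

From Pilot Require Import Defs.
From HB Require Import structures.
From mathcomp Require Import all_boot all_order all_algebra.
From mathcomp Require Import all_classical all_reals all_analysis.
From mathcomp Require Import ring lra.
Set Implicit Arguments. Unset Strict Implicit. Unset Printing Implicit Defensive.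
Import Order.TTheory GRing.Theory Num.Theory.
Import numFieldNormedType.Exports.
Local Open Scope classical_set_scope.
Local Open Scope ring_scope.

(* The breadth b_X(u) = h_X(u) + h_X(-u) of a convex body is a supremum of the
   linear functional <., u>, hence Minkowski-affine: b_{lK + (1-l)C} =
   l b_K + (1-l) b_C.  A completion C has constant breadth b_C = D(C) = D(K),
   so the width of K_l, the infimum of its breadth, is l w(K) + (1-l) w(C).
   Since K_l lies in the convex set C, D(K_l) <= D(C) = D(K); conversely a
   chord [x, y] of K in the unit direction u gives
   |x - y| <= l b_K(u) + (1-l) D = b_{K_l}(u) <= D(K_l). *)

Lemma has_sup_scale (R : realType) (S : set R) (c : R) :
  0 <= c -> has_sup S -> has_sup [set c * x | x in S].
Proof.
move=> c0 [[s0 Ss0] [b hb]]; split; first by exists (c * s0); exists s0.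
by exists (c * b) => _ [x Sx <-]; rewrite ler_wpM2l // hb.
Qed.

Lemma sup_scale (R : realType) (S : set R) (c : R) :
  0 <= c -> has_sup S -> sup [set c * x | x in S] = c * sup S.
Proof.
move=> c0 supS; have [[s0 Ss0] _] := supS.
case: (eqVneq c 0) => [->|cn0].
  have -> : [set 0 * x | x in S] = [set 0 : R].
    apply/seteqP; split => y /=; first by case=> x _ <-; rewrite mul0r.
    by move=> ->; exists s0 => //; rewrite mul0r.
  by rewrite sup1 mul0r.
have cp : 0 < c by rewrite lt_def cn0 c0.
apply/le_anti/andP; split.
  by apply: ge_sup; [exists (c * s0); exists s0|
    move=> _ [x Sx <-]; rewrite ler_wpM2l // sup_upper_bound].
rewrite -ler_pdivlMl //; apply: ge_sup; first by exists s0.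
move=> x Sx; rewrite ler_pdivlMl //; apply: sup_upper_bound.
  exact: has_sup_scale.
by exists x.
Qed.

Lemma inf_affine (R : realType) (T : Type) (U : set T) (g : T -> R) (c d : R) :
  U !=set0 -> has_lbound [set g u | u in U] -> 0 <= c ->
  inf [set c * g u + d | u in U] = c * inf [set g u | u in U] + d.
Proof.
move=> [u0 Uu0] [m lbm] c0.
have lbL : has_lbound [set c * g u + d | u in U].
  exists (c * m + d) => _ [u Uu <-]; rewrite lerD2r ler_wpM2l //.
  by apply: lbm; exists u.
apply/le_anti/andP; split; last first.
  apply: lb_le_inf; first by exists (c * g u0 + d); exists u0.
  move=> _ [u Uu <-]; rewrite lerD2r ler_wpM2l //; apply: ge_inf.
    by exists m.
  by exists u.
move: lbL; case: (eqVneq c 0) => [->|cn0] lbL.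
  rewrite mul0r add0r; have := ge_inf lbL (ex_intro2 _ _ u0 Uu0 erefl).
  by rewrite mul0r add0r.
have cp : 0 < c by rewrite lt_def cn0 c0.
rewrite -lerBlDr -ler_pdivrMl //.
apply: lb_le_inf; first by exists (g u0); exists u0.
by move=> _ [u Uu <-]; rewrite ler_pdivrMl // lerBlDr; apply: ge_inf => //; exists u.
Qed.

Section Euclidean.
Variables (R : realType) (n : nat).
Local Notation E := 'rV[R]_n.
Implicit Types x y u : E.

Lemma edotDl x y u : edot (x + y) u = edot x u + edot y u.
Proof. by rewrite /edot -big_split; apply: eq_bigr => i _; rewrite !mxE mulrDl. Qed.

Lemma edotZl a x u : edot (a *: x) u = a * edot x u.
Proof. by rewrite /edot mulr_sumr; apply: eq_bigr => i _; rewrite !mxE mulrA. Qed.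

Lemma edotNl x u : edot (- x) u = - edot x u.
Proof. by rewrite -scaleN1r edotZl mulN1r. Qed.

Lemma edotBl x y u : edot (x - y) u = edot x u - edot y u.
Proof. by rewrite edotDl edotNl. Qed.

Lemma edotC x u : edot x u = edot u x.
Proof. by apply: eq_bigr => i _; rewrite mulrC. Qed.

Lemma edotZr a x u : edot x (a *: u) = a * edot x u.
Proof. by rewrite edotC edotZl edotC. Qed.

Lemma edotNr x u : edot x (- u) = - edot x u.
Proof. by rewrite edotC edotNl edotC. Qed.

Lemma edotBr x y u : edot u (x - y) = edot u x - edot u y.
Proof. by rewrite edotC edotBl !(edotC u). Qed.

Lemma edot_ge0 x : 0 <= edot x x.
Proof. by apply: sumr_ge0 => i _; exact: sqr_ge0. Qed.

Lemma enorm_ge0 x : 0 <= enorm x.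
Proof. exact: sqrtr_ge0. Qed.

Lemma enorm_sqr x : enorm x ^+ 2 = edot x x.
Proof. by rewrite /enorm sqr_sqrtr // edot_ge0. Qed.

Lemma enormN u : enorm (- u) = enorm u.
Proof. by rewrite /enorm edotNl edotNr opprK. Qed.

(* Cauchy-Schwarz, from 0 <= |x - <x,u> u|^2 = |x|^2 - <x,u>^2. *)
Lemma edot_le_enorm x u : enorm u = 1 -> edot x u <= enorm x.
Proof.
move=> u1; have uu : edot u u = 1 by rewrite -enorm_sqr u1 expr1n.
set t := edot x u; have := edot_ge0 (x - t *: u).
rewrite edotBl !edotBr !edotZl !edotZr uu (edotC u x) -/t => h.
have t2 : t ^+ 2 <= enorm x ^+ 2 by rewrite enorm_sqr; lra.
have := enorm_ge0 x; case: (lerP t 0) => ht x0; first lra.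
by rewrite -(ler_pXn2r (isT : (0 < 2)%N)) // nnegrE; lra.
Qed.

Lemma enorm_unit_dir x : 0 < enorm x -> enorm ((enorm x)^-1 *: x) = 1.
Proof.
move=> xp; rewrite [LHS]/enorm edotZl edotZr -enorm_sqr.
by rewrite mulrA -expr2 -exprMn mulVf ?gt_eqF // expr1n sqrtr1.
Qed.

Lemma edot_unit_dir x : 0 < enorm x -> edot x ((enorm x)^-1 *: x) = enorm x.
Proof. by move=> xp; rewrite edotZr -enorm_sqr expr2 mulKf ?gt_eqF. Qed.

(* The Euclidean norm is compared with the sup norm [`|x|] of the normed
   module ['rV_n], in which compactness is expressed. *)
Lemma enorm_le_normr x : enorm x <= Num.sqrt n%:R * `|x|.
Proof.
rewrite /enorm -(ger0_norm (normr_ge0 x)) -sqrtr_sqr -sqrtrM ?ler0n //.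
rewrite ler_wsqrtr // mulr_natl -[n in _ *+ n]card_ord -sumr_const.
apply: ler_sum => i _; rewrite -expr2 -real_normK ?num_real // lerXn2r ?nnegrE //.
by rewrite [X in _ <= X]mx_normrE (le_bigmax _ _ (ord0, i)).
Qed.

End Euclidean.

Definition breadth (R : realType) (n : nat) (X : set 'rV[R]_n) (u : 'rV[R]_n) :=
  supp X u + supp X (- u).

Lemma widthE (R : realType) (n : nat) (X : set 'rV[R]_n) :
  width X = inf [set breadth X u | u in [set u | enorm u = 1]].
Proof. by []. Qed.

Section BoundedSet.
Variables (R : realType) (n : nat) (X : set 'rV[R]_n) (M : R).
Hypotheses (X0 : X !=set0) (XM : forall x, X x -> `|x| <= M).

Lemma has_sup_edot u : enorm u = 1 -> has_sup [set edot x u | x in X].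
Proof.
move=> u1; have [x0 Xx0] := X0; split; first by exists (edot x0 u); exists x0.
exists (Num.sqrt n%:R * M) => _ [x Xx <-].
rewrite (le_trans (edot_le_enorm x u1)) // (le_trans (enorm_le_normr x)) //.
by rewrite ler_wpM2l ?sqrtr_ge0 ?XM.
Qed.

Lemma has_sup_edist : has_sup [set Defs.edist x y | x in X & y in X].
Proof.
have [x0 Xx0] := X0; split.
  by exists (Defs.edist x0 x0); exists x0 => //; exists x0.
exists (Num.sqrt n%:R * (M + M)) => _ [x Xx [y Xy <-]].
rewrite (le_trans (enorm_le_normr _)) // ler_wpM2l ?sqrtr_ge0 //.
by rewrite (le_trans (ler_normB _ _)) // lerD ?XM.
Qed.

Lemma edist_le_diam x y : X x -> X y -> Defs.edist x y <= diam X.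
Proof.
move=> Xx Xy; apply: sup_upper_bound; first exact: has_sup_edist.
by exists x => //; exists y.
Qed.

Lemma diam_ge0 : 0 <= diam X.
Proof. by have [x Xx] := X0; rewrite (le_trans (enorm_ge0 (x - x))) ?edist_le_diam. Qed.

Lemma edot_le_supp x u : enorm u = 1 -> X x -> edot x u <= supp X u.
Proof. by move=> u1 Xx; apply: sup_upper_bound; [exact: has_sup_edot|exists x]. Qed.

Lemma edotB_le_breadth x y u : enorm u = 1 -> X x -> X y ->
  edot (x - y) u <= breadth X u.
Proof.
move=> u1 Xx Xy; have Nu1 : enorm (- u) = 1 by rewrite enormN.
have := edot_le_supp u1 Xx; have := edot_le_supp Nu1 Xy.
by rewrite edotBl edotNr /breadth; lra.
Qed.

Lemma breadth_ge0 u : enorm u = 1 -> 0 <= breadth X u.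
Proof.
move=> u1; have [x Xx] := X0.
by have := edotB_le_breadth u1 Xx Xx; rewrite edotBl subrr.
Qed.

Lemma breadth_le_diam u : enorm u = 1 -> breadth X u <= diam X.
Proof.
move=> u1; have Nu1 : enorm (- u) = 1 by rewrite enormN.
rewrite /breadth -lerBrDr; apply: ge_sup; first by case: (has_sup_edot u1).
move=> _ [x Xx <-]; rewrite lerBrDr addrC -lerBrDr.
apply: ge_sup; first by case: (has_sup_edot Nu1).
move=> _ [y Xy <-]; rewrite lerBrDr addrC edotNr -edotBl.
by rewrite (le_trans (edot_le_enorm _ u1)) ?edist_le_diam.
Qed.

End BoundedSet.

Lemma convex_body_bounded (R : realType) (n : nat) (X : set 'rV[R]_n) :
  convex_body X -> exists M, forall x, X x -> `|x| <= M.
Proof.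
move=> [_ [/compact_bounded [M [_ hM]] _]]; exists (M + 1) => x Xx.
by apply: hM => //; rewrite ltrDl.
Qed.

(* w(C) <= b_C(u) <= D(C) = w(C). *)
Lemma breadth_constant_width (R : realType) (n : nat) (C : set 'rV[R]_n) u :
  convex_body C -> diam C = width C -> enorm u = 1 -> breadth C u = diam C.
Proof.
move=> Cbody dCw u1; have [M CM] := convex_body_bounded Cbody.
have C0 : C !=set0 by case: Cbody.
apply/le_anti; rewrite (breadth_le_diam C0 CM u1) /= dCw widthE.
apply: ge_inf; last by exists u.
by exists 0 => _ [v v1 <-]; exact: (breadth_ge0 C0 CM v1).
Qed.

Section MinkowskiCombination.
Variables (R : realType) (n : nat) (A B : set 'rV[R]_n) (MA MB a b : R).
Hypotheses (A0 : A !=set0) (AM : forall x, A x -> `|x| <= MA).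
Hypotheses (B0 : B !=set0) (BM : forall x, B x -> `|x| <= MB).
Hypotheses (a0 : 0 <= a) (b0 : 0 <= b).

Local Notation AB := (mink_sum (mink_scale a A) (mink_scale b B)).

Lemma supp_mink u : enorm u = 1 -> supp AB u = a * supp A u + b * supp B u.
Proof.
move=> u1; have supA := has_sup_edot A0 AM u1; have supB := has_sup_edot B0 BM u1.
rewrite /supp -(sup_scale a0 supA) -(sup_scale b0 supB).
rewrite -sup_sumE; [congr sup|exact: has_sup_scale..]; apply/seteqP; split.
- move=> _ [_ [_ [x Ax <-] [_ [y By <-] <-]] <-].
  exists (a * edot x u); first by exists (edot x u) => //; exists x.
  exists (b * edot y u); first by exists (edot y u) => //; exists y.
  by rewrite edotDl !edotZl.
- move=> _ [_ [_ [x Ax <-] <-] [_ [_ [y By <-] <-] <-]].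
  exists (a *: x + b *: y); last by rewrite edotDl !edotZl.
  by exists (a *: x); [exists x|exists (b *: y) => //; exists y].
Qed.

Lemma breadth_mink u : enorm u = 1 ->
  breadth AB u = a * breadth A u + b * breadth B u.
Proof.
move=> u1; have Nu1 : enorm (- u) = 1 by rewrite enormN.
by rewrite /breadth !supp_mink //; ring.
Qed.

End MinkowskiCombination.

Section CompletionCombination.
Variables (R : realType) (n : nat) (K C : set 'rV[R]_n) (l : R).
Hypotheses (Kbody : convex_body K) (KC : completion K C).
Hypotheses (l0 : 0 <= l) (l1 : l <= 1).

Local Notation Kl := (mink_sum (mink_scale l K) (mink_scale (1 - l) C)).

Let K0 : K !=set0. Proof. by case: Kbody. Qed.
Let Cbody : convex_body C. Proof. by case: KC. Qed.
Let C0 : C !=set0. Proof. by case: Cbody. Qed.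
Let KsubC : K `<=` C. Proof. by case: KC => _ [sub _]. Qed.
Let dKC : diam K = diam C. Proof. by case: KC => _ [_ [dKC _]]. Qed.
Let dCw : diam C = width C. Proof. by case: KC => _ [_ [_ dCw]]. Qed.

Lemma mink_combination_sub : Kl `<=` C.
Proof.
case: Cbody => _ [_ convC] _ [_ [x Kx <-] [_ [y Cy <-] <-]].
exact: convC (KsubC Kx) Cy l0 l1.
Qed.

Lemma mink_combination_nonempty : Kl !=set0.
Proof.
have [[x Kx] [y Cy]] := (K0, C0).
exists (l *: x + (1 - l) *: y); exists (l *: x); first by exists x.
by exists ((1 - l) *: y) => //; exists y.
Qed.

Lemma breadth_mink_combination M u : (forall x, C x -> `|x| <= M) ->
  enorm u = 1 -> breadth Kl u = l * breadth K u + (1 - l) * diam K.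
Proof.
move=> CM u1; rewrite dKC -(breadth_constant_width Cbody dCw u1).
have KM x : K x -> `|x| <= M by move/KsubC; exact: CM.
by apply: (breadth_mink K0 KM C0 CM l0 _ u1); rewrite subr_ge0.
Qed.

Lemma diam_mink_combination : diam Kl = diam K.
Proof.
have [M CM] := convex_body_bounded Cbody.
have KlM x : Kl x -> `|x| <= M by move/mink_combination_sub; exact: CM.
have KM x : K x -> `|x| <= M by move/KsubC; exact: CM.
have Kl0 := mink_combination_nonempty.
apply/le_anti/andP; split.
  apply: ge_sup; first by case: (has_sup_edist Kl0 KlM).
  move=> _ [x Klx [y Kly <-]]; rewrite dKC.
  by apply: (edist_le_diam C0 CM); exact: mink_combination_sub.
apply: ge_sup; first by case: (has_sup_edist K0 KM).
move=> _ [x Kx [y Ky <-]].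
have [xy0|xy_neq0] := eqVneq (Defs.edist x y) 0.
  by rewrite xy0 (diam_ge0 Kl0 KlM).
have xyp : 0 < enorm (x - y) by rewrite lt_def xy_neq0 enorm_ge0.
set u := (enorm (x - y))^-1 *: (x - y).
have u1 : enorm u = 1 by exact: enorm_unit_dir.
have xyK : Defs.edist x y <= diam K by exact: (edist_le_diam K0 KM).
have xyb : Defs.edist x y <= breadth K u.
  by rewrite /Defs.edist -(edot_unit_dir xyp) (edotB_le_breadth K0 KM u1 Kx Ky).
rewrite (le_trans _ (breadth_le_diam Kl0 KlM u1)) // (breadth_mink_combination CM u1).
have l10 : 0 <= 1 - l by rewrite subr_ge0.
have := ler_wpM2l l0 xyb; have := ler_wpM2l l10 xyK; lra.
Qed.

Lemma width_mink_combination : width Kl = l * width K + (1 - l) * width C.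
Proof.
have [M CM] := convex_body_bounded Cbody.
have KM x : K x -> `|x| <= M by move/KsubC; exact: CM.
rewrite !widthE; set U := [set u | enorm u = 1].
have [->|/set0P U0] := eqVneq U set0.
  by rewrite !image_set0; ring.
rewrite (eq_imagel (fun u u1 => breadth_mink_combination CM u1)).
rewrite inf_affine //; first by rewrite dKC dCw.
by exists 0 => _ [u u1 <-]; exact: (breadth_ge0 K0 KM u1).
Qed.

End CompletionCombination.

Unset Implicit Arguments.

Theorem lemma2p2 (R : realType) (n : nat) (K CK : set 'rV[R]_n) :
  convex_body K -> convex_body CK -> completion K CK ->
  forall l : R, 0 <= l -> l <= 1 ->
    diam (mink_sum (mink_scale l K) (mink_scale (1 - l) CK)) = diam K /\
    width (mink_sum (mink_scale l K) (mink_scale (1 - l) CK)) =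
      l * width K + (1 - l) * width CK.
Proof.
move=> Kbody _ KC l l0 l1.
by split; [exact: diam_mink_combination | exact: width_mink_combination].
Qed.
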